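(* For all $n\ge1$, $$q_n=\frac12nH_n-\frac12P_n,\qquad r_n=\frac12nP_n-\frac12P_n=\frac{n-1}{2}P_n.$$
   Context: Let $s=\sqrt3/2$. Consider the standard triangular lattice in the plane whose vertices are the points $(a+b/2,\,bs)$ with $a,b\in\mathbb Z$ and whose edges are the unit segments joining lattice points in the directions $0^\circ,60^\circ,120^\circ$; it divides the plane into unit equilateral triangles called cells. A small tile is a single cell; a large tile is an equilateral triangle of side $2$ whose vertices are lattice points (so it is a union of $4$ cells; it may point up or down). For a region $R$ that is a finite union of cells, a tiling of $R$ is a finite set of small and large tiles, each contained in $R$, with pairwise disjoint interiors and union equal to $R$. For $n\ge1$, the region $H_n$ is the union of the trapezoid with vertices $(0,0),(n,0),(n-\tfrac12,s),(\tfrac12,s)$ and the trapezoid with vertices $(\tfrac12,s),(n-\tfrac12,s),(n,2s),(0,2s)$ ($4n-2$ cells; for $n=1$ two unit triangles meeting at a point), and $P_n$ is $H_n$ with the cell with vertices $(n-1,0),(n,0),(n-\tfrac12,s)$ removed. $H_n$ and $P_n$ also denote the numbers of tilings of these regions; thus $H_n=\frac{(1+\sqrt2)^n+(1-\sqrt2)^n}{2}$ and $P_n=\frac{(1+\sqrt2)^n-(1-\sqrt2)^n}{2\sqrt2}$. Define $q_n$ (resp. $r_n$) as the sum, over all tilings of $H_n$ (resp. $P_n$), of the number of large tiles in the tiling. *)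

From HB Require Import structures.
From mathcomp Require Import all_boot all_order all_algebra.
From mathcomp Require Import finmap.
Set Implicit Arguments. Unset Strict Implicit. Unset Printing Implicit Defensive.
Import Order.TTheory GRing.Theory Num.Theory.
Local Open Scope ring_scope.
Local Open Scope fset_scope.

(* Lattice coordinates: the lattice point (a,b) : int * int is the point
   (a + b/2, b*sqrt(3)/2) of the plane.
   Cells: (a, b, true)  = the up-pointing unit triangle with vertices
                          (a,b), (a+1,b), (a,b+1);
          (a, b, false) = the down-pointing unit triangle with vertices
                          (a+1,b), (a,b+1), (a+1,b+1).
   Every cell of the triangular lattice is exactly one of these. *)
Definition cell := (int * int * bool)%type.

(* Tiles: (false, c)       = the small tile consisting of the cell c
                              (the orientation bit of the anchor is used);
          (true, (a,b,true))  = the large up-pointing triangle with vertices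
                              (a,b), (a+2,b), (a,b+2);
          (true, (a,b,false)) = the large down-pointing triangle with vertices
                              (a+2,b), (a,b+2), (a+2,b+2).
   Every side-2 lattice triangle (up or down) is exactly one of these. *)
Definition tile := (bool * cell)%type.

Definition is_large (t : tile) : bool := t.1.

Definition tile_cells (t : tile) : {fset cell} :=
  match t with
  | (false, c) => [fset c]
  | (true, (a, b, true)) =>
      [fset (a, b, true); ((a + 1)%R, b, true); (a, (b + 1)%R, true); (a, b, false)]
  | (true, (a, b, false)) =>
      [fset ((a + 1)%R, b, false); (a, (b + 1)%R, false); ((a + 1)%R, (b + 1)%R, false);
            ((a + 1)%R, (b + 1)%R, true)]
  end.

Definition is_tiling (R : {fset cell}) (T : {fset tile}) : bool :=
  [&& all (fun t => tile_cells t `<=` R) T,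
      all (fun t1 => all (fun t2 => (t1 != t2) ==> [disjoint tile_cells t1 & tile_cells t2]%fset) T) T
    & \bigcup_(t <- T) tile_cells t == R].

(* A finite set of tiles containing every tile that meets R: any tile
   meeting a cell (a,b,_) is either that small tile or a large tile anchored
   at (a+i, b+j) with i, j in {-1, 0}. *)
Definition cand_tiles (R : {fset cell}) : {fset tile} :=
  \bigcup_(c <- R)
    ([fset (false, c)] `|`
     [fset (true, ((c.1.1 - i%:Z)%R, (c.1.2 - j%:Z)%R, true))
        | i in iota 0 2, j in iota 0 2] `|`
     [fset (true, ((c.1.1 - i%:Z)%R, (c.1.2 - j%:Z)%R, false))
        | i in iota 0 2, j in iota 0 2]).

(* All tilings of R (every tiling uses only tiles meeting R, hence only
   candidate tiles, so this is the set of all tilings of R). *)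
Definition tilings (R : {fset cell}) : {fset {fset tile}} :=
  [fset T in fpowerset (cand_tiles R) | is_tiling R T].

Definition num_tilings (R : {fset cell}) : nat := #|` tilings R|.

Definition num_large_total (R : {fset cell}) : nat :=
  \sum_(T <- tilings R) #|` [fset t in T | is_large t]|.

(* Bottom row (between heights 0 and s):
   up cells (i,0) for 0 <= i <= n-1, down cells (i,0) for 0 <= i <= n-2.
   Top row (between heights s and 2s): down cells (c,1) for -1 <= c <= n-2,
   up cells (c,1) for 0 <= c <= n-2. *)
Definition H_region (n : nat) : {fset cell} :=
  [fset ((i%:Z : int), (0 : int), true) | i in iota 0 n] `|`
  [fset ((i%:Z : int), (0 : int), false) | i in iota 0 n.-1] `|`
  [fset (((i%:Z - 1)%R : int), (1 : int), false) | i in iota 0 n] `|`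
  [fset ((i%:Z : int), (1 : int), true) | i in iota 0 n.-1].

(* P_n: H_n minus the cell with vertices (n-1,0), (n,0), (n-1/2,s),
   i.e. the up cell (n-1, 0). *)
Definition P_region (n : nat) : {fset cell} :=
  H_region n `\ (((n%:Z - 1)%R : int), (0 : int), true).

Definition Hn (n : nat) : nat := num_tilings (H_region n).
Definition Pn (n : nat) : nat := num_tilings (P_region n).
Definition qn (n : nat) : nat := num_large_total (H_region n).
Definition rn (n : nat) : nat := num_large_total (P_region n).

(* Every large tile inside H_n covers the down cell (i, 0) of the bottom row for
   some i < n - 1, either as the up triangle anchored at (i, 0) or as the down
   triangle anchored at (i - 1, 0); small tiles fill the rest. So a tiling is a
   word of length n - 1 over the slots {empty, up, down}, subject only to: no
   two consecutive ups, no two consecutive downs; for P_n the last slot is not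
   an up.  A transfer-matrix induction over the last slot computes the number
   of words ending in each slot together with their total number of letters,
   which gives 2 q_n + P_n = n H_n and 2 r_n = (n - 1) P_n. *)

From HB Require Import structures.
From mathcomp Require Import all_boot all_order all_algebra.
From mathcomp Require Import finmap.
From mathcomp Require Import zify lra.
Import Order.TTheory GRing.Theory Num.Theory.

Set Implicit Arguments. Unset Strict Implicit. Unset Printing Implicit Defensive.

Definition slot := (bool * bool)%type.

Definition slot0 : slot := (false, false).
Definition slotU : slot := (true, false).
Definition slotD : slot := (false, true).
Definition slotUD : slot := (true, true).

Definition compatible (x y : slot) : bool :=
  ~~ (y.1 && y.2) && ~~ (x.1 && y.1) && ~~ (x.2 && y.2).

Definition successors (x : slot) : seq slot :=
  filter (compatible x) [:: slot0; slotU; slotD; slotUD].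

Fixpoint words (k : nat) : seq (seq slot) :=
  if k is k'.+1 then [seq rcons s x | s <- words k', x <- successors (last slot0 s)]
  else [:: [::]].

Lemma mem_words k s : (s \in words k) = (size s == k) && path compatible slot0 s.
Proof.
elim: k s => [|k IH] s; first by case: s.
apply/allpairsPdep/idP => [[s' [x [s'k xs ->]]]|].
  move: s'k; rewrite IH => /andP[/eqP <- s'p].
  rewrite size_rcons eqxx rcons_path s'p.
  by move: xs; rewrite mem_filter => /andP[].
case/lastP: s => [//|s x]; rewrite size_rcons eqSS rcons_path => /and3P[sk sp sx].
exists s, x; split => //; first by rewrite IH sk.
by rewrite mem_filter sx; case: x {sx} => [[] []].
Qed.

Lemma uniq_words k : uniq (words k).
Proof.
elim: k => [//|k IH] /=; apply: allpairs_uniq_dep => //.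
  by move=> s _; apply: filter_uniq.
move=> [s1 x1] [s2 x2] _ _ /= eq12; have := congr1 (last slot0) eq12.
by rewrite !last_rcons => ex; subst x2; case/rcons_inj: eq12 => ->.
Qed.

Definition weight (s : seq slot) : nat := count fst s + count snd s.

Lemma weight_rcons s x : weight (rcons s x) = weight s + (x.1 + x.2).
Proof. by rewrite /weight -cats1 !count_cat /=; lia. Qed.

Definition nwords_ending k (y : slot) : nat :=
  \sum_(s <- words k) (last slot0 s == y).
Definition weight_ending k (y : slot) : nat :=
  \sum_(s <- words k) (last slot0 s == y) * weight s.

Lemma sum_words_succ k (F : slot -> nat -> nat) :
  \sum_(s <- words k.+1) F (last slot0 s) (weight s) =
  \sum_(s <- words k) \sum_(x <- successors (last slot0 s)) F x (weight s + (x.1 + x.2)).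
Proof.
rewrite big_allpairs_dep; apply: eq_bigr => s _; apply: eq_bigr => x _.
by rewrite last_rcons weight_rcons.
Qed.

Ltac transfer_step :=
  rewrite /nwords_ending /weight_ending ?(sum_words_succ _ (fun x _ => (x == _) : nat))
    ?(sum_words_succ _ (fun x w => (x == _) * w)) -?big_split /=;
  let s := fresh "s" in
  (apply: eq_bigr || apply: big1_seq) => s _;
  by case: (last slot0 s) => [[] []]; rewrite /successors /= ?big_cons ?big_nil /=; lia.

Lemma nwords_ending0 k :
  nwords_ending k.+1 slot0 =
  nwords_ending k slot0 + nwords_ending k slotU + nwords_ending k slotD + nwords_ending k slotUD.
Proof. transfer_step. Qed.

Lemma nwords_endingU k : nwords_ending k.+1 slotU = nwords_ending k slot0 + nwords_ending k slotD.
Proof. transfer_step. Qed.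

Lemma nwords_endingD k : nwords_ending k.+1 slotD = nwords_ending k slot0 + nwords_ending k slotU.
Proof. transfer_step. Qed.

Lemma weight_ending0 k :
  weight_ending k.+1 slot0 =
  weight_ending k slot0 + weight_ending k slotU + weight_ending k slotD + weight_ending k slotUD.
Proof. transfer_step. Qed.

Lemma weight_endingU k :
  weight_ending k.+1 slotU =
  weight_ending k slot0 + nwords_ending k slot0 + weight_ending k slotD + nwords_ending k slotD.
Proof. transfer_step. Qed.

Lemma weight_endingD k :
  weight_ending k.+1 slotD =
  weight_ending k slot0 + nwords_ending k slot0 + weight_ending k slotU + nwords_ending k slotU.
Proof. transfer_step. Qed.

Lemma nwords_endingUD k : nwords_ending k slotUD = 0.
Proof. case: k => [|k]; [by rewrite /nwords_ending big_seq1 | transfer_step]. Qed.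

Lemma weight_endingUD k : weight_ending k slotUD = 0.
Proof. case: k => [|k]; [by rewrite /weight_ending big_seq1 | transfer_step]. Qed.

Lemma nwords_endingU_eqD k : nwords_ending k slotU = nwords_ending k slotD.
Proof.
elim: k => [|k IH]; first by rewrite /nwords_ending !big_seq1.
by rewrite nwords_endingU nwords_endingD IH.
Qed.

Lemma weight_endingU_eqD k : weight_ending k slotU = weight_ending k slotD.
Proof.
elim: k => [|k IH]; first by rewrite /weight_ending !big_seq1.
by rewrite weight_endingU weight_endingD IH nwords_endingU_eqD.
Qed.

Lemma weight_ending_formula k :
  2 * weight_ending k slot0 + nwords_ending k slotD = k * nwords_ending k slot0 /\
  2 * weight_ending k slotD = k.+1 * nwords_ending k slotD.
Proof.
elim: k => [|k [IH0 IHD]]; first by rewrite /weight_ending /nwords_ending !big_seq1.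
rewrite nwords_ending0 nwords_endingD weight_ending0 weight_endingD.
rewrite nwords_endingUD weight_endingUD nwords_endingU_eqD weight_endingU_eqD.
split; lia.
Qed.

Definition no_final_up (s : seq slot) : bool := ~~ (last slot0 s).1.

Lemma weight_words k :
  2 * (\sum_(s <- words k) weight s) + count no_final_up (words k) = k.+1 * size (words k) /\
  2 * (\sum_(s <- words k | no_final_up s) weight s) = k * count no_final_up (words k).
Proof.
have [formula0 formulaD] := weight_ending_formula k.
have nwordsE : size (words k) =
    nwords_ending k slot0 + nwords_ending k slotU + nwords_ending k slotD + nwords_ending k slotUD.
  rewrite -sum1_size /nwords_ending -!big_split /=; apply: eq_bigr => s _.
  by case: (last slot0 s) => [[] []].
have nwords_nfuE : count no_final_up (words k) = nwords_ending k slot0 + nwords_ending k slotD.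
  rewrite -sum1_count big_mkcond /nwords_ending -!big_split /=; apply: eq_bigr => s _.
  by rewrite /no_final_up; case: (last slot0 s) => [[] []].
have weightE : \sum_(s <- words k) weight s =
    weight_ending k slot0 + weight_ending k slotU + weight_ending k slotD + weight_ending k slotUD.
  rewrite /weight_ending -!big_split /=; apply: eq_bigr => s _.
  by case: (last slot0 s) => [[] []] /=; lia.
have weight_nfuE : \sum_(s <- words k | no_final_up s) weight s =
    weight_ending k slot0 + weight_ending k slotD.
  rewrite big_mkcond /weight_ending -!big_split /=; apply: eq_bigr => s _.
  by rewrite /no_final_up; case: (last slot0 s) => [[] []] /=; lia.
rewrite nwordsE nwords_nfuE weightE weight_nfuE nwords_endingUD weight_endingUD.
rewrite nwords_endingU_eqD weight_endingU_eqD in formula0 formulaD *.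
split; lia.
Qed.

Section TilingsByLargeTiles.
Local Open Scope fset_scope.

Implicit Types (R : {fset cell}) (T : {fset tile}) (L : seq tile).

Definition covered L (c : cell) : bool := has (fun t => c \in tile_cells t) L.

Definition fill R L : {fset tile} :=
  [fset t | t in L] `|` [fset (false, c) | c in [fset c in R | ~~ covered L c]].

Lemma mem_fill R L (b : bool) (c : cell) :
  ((b, c) \in fill R L) = ((b, c) \in L) || [&& ~~ b, c \in R & ~~ covered L c].
Proof.
rewrite /fill inE in_fset /=; congr (_ || _); case: b => /=.
  by apply/negbTE/imfsetP => -[].
by rewrite mem_imfset => [|x y []]; rewrite //= !inE.
Qed.

Lemma mem_fill_large R L (t : tile) : is_large t -> (t \in fill R L) = (t \in L).
Proof. by case: t => [[] c] //= _; rewrite mem_fill orbF. Qed.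

Lemma tilingP R T : is_tiling R T ->
  [/\ forall t, t \in T -> tile_cells t `<=` R,
      forall t1 t2, t1 \in T -> t2 \in T -> t1 != t2 ->
        [disjoint tile_cells t1 & tile_cells t2]
    & forall c, c \in R -> exists2 t, t \in T & c \in tile_cells t].
Proof.
case/and3P => /allP sub /allP disj /eqP cover; split => //.
  by move=> t1 t2 t1T t2T ne12; move/allP: (disj t1 t1T) => /(_ t2 t2T); rewrite ne12.
by move=> c; rewrite -cover => /bigfcupP [t /andP[tT _] ct]; exists t.
Qed.

Lemma tiling_overlap R T t1 t2 c : is_tiling R T -> t1 \in T -> t2 \in T ->
  c \in tile_cells t1 -> c \in tile_cells t2 -> t1 = t2.
Proof.
case/tilingP => _ disj _ t1T t2T ct1 ct2; apply/eqP/negP => /negP ne12.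
by move/fdisjointP: (disj t1 t2 t1T t2T ne12) => /(_ c ct1); rewrite ct2.
Qed.

Lemma tiling_fill R T L : is_tiling R T ->
  (forall t, (t \in L) = (t \in T) && is_large t) -> T = fill R L.
Proof.
move=> tilT memL; have [sub _ cover] := tilingP tilT.
apply/fsetP => -[b c]; rewrite mem_fill memL /=.
case: b => /=; first by rewrite andbT orbF.
rewrite andbF /=; apply/idP/idP => [cT|/andP[cR /hasPn uncov]].
  have cR : c \in R by apply: (fsubsetP (sub _ cT)); rewrite inE.
  rewrite cR /=; apply/hasPn => t; rewrite memL => /andP[tT tlarge].
  apply/negP => ct; have eq_t := tiling_overlap tilT cT tT (fset11 c) ct.
  by rewrite -eq_t in tlarge.
have [t tT ct] := cover c cR; move: (uncov t); rewrite memL tT /=.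
case: t tT ct => [[] c'] //= tT ct; first by move/(_ isT); rewrite ct.
by move: ct; rewrite inE => /eqP ->.
Qed.

Lemma fill_tiling R L :
  (forall t, t \in L -> is_large t) ->
  (forall t, t \in L -> tile_cells t `<=` R) ->
  (forall t1 t2, t1 \in L -> t2 \in L -> t1 != t2 ->
     [disjoint tile_cells t1 & tile_cells t2]) ->
  is_tiling R (fill R L).
Proof.
move=> large sub disj.
have memF t : t \in fill R L ->
    t \in L \/ exists2 c, t = (false, c) & (c \in R) && ~~ covered L c.
  case: t => b c; rewrite mem_fill => /orP[]; first by left.
  by case: b => //= /andP[cR nc]; right; exists c; rewrite ?cR.
apply/and3P; split.
- apply/allP => t /memF [tL|[c -> /andP[cR _]]]; first exact: sub.
  by apply/fsubsetP => c'; rewrite inE => /eqP ->.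
- apply/allP => t1 /memF mem1; apply/allP => t2 /memF mem2; apply/implyP => ne12.
  apply/fdisjointP => c ct1; apply/negP => ct2.
  case: mem1 => [t1L|[c1 E1 /andP[_ nc1]]]; case: mem2 => [t2L|[c2 E2 /andP[_ nc2]]].
  + by move/fdisjointP: (disj _ _ t1L t2L ne12) => /(_ c ct1); rewrite ct2.
  + move: ct2; rewrite E2 inE => /eqP c_eq; subst c.
    by move/negP: nc2; apply; apply/hasP; exists t1.
  + move: ct1; rewrite E1 inE => /eqP c_eq; subst c.
    by move/negP: nc1; apply; apply/hasP; exists t2.
  + move: ct1 ct2; rewrite E1 E2 !inE => /eqP -> /eqP c_eq.
    by rewrite E1 E2 c_eq eqxx in ne12.
- rewrite eqEfsubset; apply/andP; split.
    apply/bigfcupsP => t /memF [tL|[c -> /andP[cR _]]] _; first exact: sub.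
    by apply/fsubsetP => c'; rewrite inE => /eqP ->.
  apply/fsubsetP => c cR; apply/bigfcupP.
  have [/hasP [t tL ct]|nc] := boolP (covered L c).
    by exists t => //; rewrite andbT /fill inE in_fset tL.
  exists (false, c); last by rewrite inE.
  by rewrite andbT mem_fill /= cR nc orbT.
Qed.

Lemma mem_cand_tiles R (t : tile) : tile_cells t `<=` R -> t \in cand_tiles R.
Proof.
move/fsubsetP => sub; apply/bigfcupP.
case: t sub => [[] [[a b] []]] sub.
- exists (a, b, true); first by rewrite andbT sub // !inE eqxx.
  rewrite !inE; apply/orP; left; apply/orP; right.
  by apply/imfset2P; exists 0%N; rewrite ?inE //; exists 0%N; rewrite ?inE //= !subr0.
- exists ((a + 1)%R, (b + 1)%R, false); first by rewrite andbT sub // !inE eqxx ?orbT.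
  rewrite !inE; apply/orP; right.
  by apply/imfset2P; exists 1%N; rewrite ?inE //; exists 1%N; rewrite ?inE //= !addrK.
- by exists (a, b, true); rewrite ?andbT ?sub ?inE ?eqxx.
- by exists (a, b, false); rewrite ?andbT ?sub ?inE ?eqxx.
Qed.

Lemma mem_tilings R T : (T \in tilings R) = is_tiling R T.
Proof.
rewrite /tilings !inE fpowersetE /=; have [tilT|] := boolP (is_tiling R T); last by rewrite andbF.
rewrite andbT; apply/fsubsetP => t tT; apply: mem_cand_tiles.
by case/tilingP: tilT => sub _ _; apply: sub.
Qed.

Lemma card_large_fill R L : uniq L -> (forall t, t \in L -> is_large t) ->
  #|` [fset t in fill R L | is_large t]| = size L.
Proof.
move=> uL large; suff -> : [fset t in fill R L | is_large t] = [fset t in L].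
  by rewrite card_fseq undup_id.
apply/fsetP => -[b c]; move: (mem_fill R L b c); rewrite !inE /= => ->.
case: b => /=; first by rewrite orbF andbT.
by rewrite andbF; apply/esym/negbTE/negP => /large.
Qed.

End TilingsByLargeTiles.

Section LargeTilesOfH.
Local Open Scope ring_scope.
Local Open Scope fset_scope.

(* The two large tiles of H_n covering the bottom-row down cell (i, 0). *)
Definition up_tile (i : nat) : tile := (true, ((i%:Z : int), (0 : int), true)).
Definition down_tile (i : nat) : tile := (true, (((i%:Z - 1)%R : int), (0 : int), false)).

Definition region (punct : bool) (n : nat) : {fset cell} :=
  if punct then P_region n else H_region n.

Definition in_H (n : nat) (c : cell) : bool :=
  let: (x, y, up) := c in
  if up then ((y == 0) && (0 <= x) && (x < n%:Z)) || ((y == 1) && (0 <= x) && (x < n%:Z - 1))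
  else ((y == 0) && (0 <= x) && (x < n%:Z - 1)) || ((y == 1) && (-1 <= x) && (x < n%:Z - 1)).

Definition in_region (punct : bool) (n : nat) (c : cell) : bool :=
  in_H n c && ~~ (punct && (c == ((n%:Z - 1)%R, 0, true))).

Lemma imfset_iotaP (f : nat -> cell) m c :
  reflect (exists2 i, (i < m)%N & c = f i) (c \in [fset f i | i in iota 0 m]).
Proof.
apply: (iffP idP) => [/imfsetP [i /= im ->]|[i im ->]].
  by exists i; move: im; rewrite // mem_iota.
by apply/imfsetP; exists i; rewrite //= mem_iota.
Qed.

Lemma mem_H_region n c : (c \in H_region n) = in_H n c.
Proof.
case: c => [[x y] up]; rewrite /H_region !inE; apply/idP/idP.
  by case/orP => [/orP [/orP [|]|]|] /imfset_iotaP [i im [-> -> ->]] /=; lia.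
case: up => /= /orP [] /andP [/andP [/eqP -> x_ge] x_lt].
- do 3 (apply/orP; left); apply/imfset_iotaP; exists (absz x); first lia; repeat f_equal; lia.
- apply/orP; right; apply/imfset_iotaP; exists (absz x); first lia; repeat f_equal; lia.
- do 2 (apply/orP; left); apply/orP; right; apply/imfset_iotaP; exists (absz x); first lia.
  by repeat f_equal; lia.
- apply/orP; left; apply/orP; right; apply/imfset_iotaP; exists (absz (x + 1)%R); first lia.
  by repeat f_equal; lia.
Qed.

Lemma mem_region punct n c : (c \in region punct n) = in_region punct n c.
Proof.
rewrite /region /in_region; case: punct; last by rewrite mem_H_region andbT.
by rewrite /P_region in_fsetD1 mem_H_region andbC.
Qed.

Lemma in_fset4 (T : choiceType) (x a b c d : T) :
  (x \in [fset a; b; c; d]) = [|| x == a, x == b, x == c | x == d].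
Proof. by rewrite !inE !orbA. Qed.

Lemma large_tile_in_region punct n (t : tile) : is_large t -> tile_cells t `<=` region punct n ->
  exists i, (i.+1 < n)%N /\
    ((t = up_tile i /\ ~~ (punct && (i.+2 == n))) \/ t = down_tile i).
Proof.
case: t => [[] [[a b] up]] // _ /fsubsetP sub.
have cellP c : c \in tile_cells (true, (a, b, up)) -> in_region punct n c.
  by move/sub; rewrite mem_region.
case: up {sub} cellP => /= cellP.
- have c1 : in_region punct n (a, b, true) by apply: cellP; rewrite in_fset4 eqxx.
  have c2 : in_region punct n ((a + 1)%R, b, true) by apply: cellP; rewrite in_fset4 eqxx ?orbT.
  have c3 : in_region punct n (a, (b + 1)%R, true) by apply: cellP; rewrite in_fset4 eqxx ?orbT.
  have c4 : in_region punct n (a, b, false) by apply: cellP; rewrite in_fset4 eqxx ?orbT.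
  move: c1 c2 c3 c4; rewrite /in_region /in_H !xpair_eqE /= => c1 c2 c3 c4.
  exists (absz a); split; first lia.
  left; split; first by rewrite /up_tile; repeat f_equal; lia.
  by clear cellP; case: punct c1 c2 c3 c4 => /=; lia.
- have c1 : in_region punct n ((a + 1)%R, b, false) by apply: cellP; rewrite in_fset4 eqxx.
  have c2 : in_region punct n (a, (b + 1)%R, false) by apply: cellP; rewrite in_fset4 eqxx ?orbT.
  have c3 : in_region punct n ((a + 1)%R, (b + 1)%R, false).
    by apply: cellP; rewrite in_fset4 eqxx ?orbT.
  have c4 : in_region punct n ((a + 1)%R, (b + 1)%R, true).
    by apply: cellP; rewrite in_fset4 eqxx ?orbT.
  move: c1 c2 c3 c4; rewrite /in_region /in_H !xpair_eqE /= => c1 c2 c3 c4.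
  exists (absz (a + 1)%R); split; first lia.
  by right; rewrite /down_tile; repeat f_equal; lia.
Qed.

Ltac cell_cases := rewrite /= ?in_fset4; case/or4P => /eqP ->.

Lemma up_tile_sub punct n i :
  (i.+1 < n)%N -> ~~ (punct && (i.+2 == n)) -> tile_cells (up_tile i) `<=` region punct n.
Proof.
move=> i_lt not_last; apply/fsubsetP => c; cell_cases;
  rewrite mem_region /in_region /in_H !xpair_eqE /=; case: punct not_last => /=; lia.
Qed.

Lemma down_tile_sub punct n i : (i.+1 < n)%N -> tile_cells (down_tile i) `<=` region punct n.
Proof.
move=> i_lt; apply/fsubsetP => c; cell_cases;
  rewrite mem_region /in_region /in_H !xpair_eqE /=; case: punct => /=; lia.
Qed.

Lemma disjoint_up_tiles i j : i != j -> i != j.+1 -> j != i.+1 ->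
  [disjoint tile_cells (up_tile i) & tile_cells (up_tile j)].
Proof. by move=> *; apply/fdisjointP => c; cell_cases; rewrite !xpair_eqE /=; lia. Qed.

Lemma disjoint_down_tiles i j : i != j -> i != j.+1 -> j != i.+1 ->
  [disjoint tile_cells (down_tile i) & tile_cells (down_tile j)].
Proof. by move=> *; apply/fdisjointP => c; cell_cases; rewrite !xpair_eqE /=; lia. Qed.

Lemma disjoint_up_down i j : i != j -> [disjoint tile_cells (up_tile i) & tile_cells (down_tile j)].
Proof. by move=> *; apply/fdisjointP => c; cell_cases; rewrite !xpair_eqE /=; lia. Qed.

Lemma disjoint_down_up i j : i != j -> [disjoint tile_cells (down_tile i) & tile_cells (up_tile j)].
Proof. by move=> *; apply/fdisjointP => c; cell_cases; rewrite !xpair_eqE /=; lia. Qed.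

Lemma up_tile_inj : injective up_tile.
Proof. by move=> i j [] /eqP; lia. Qed.

Lemma down_tile_inj : injective down_tile.
Proof. by move=> i j [] /eqP; lia. Qed.

Lemma up_neq_down i j : up_tile i != down_tile j.
Proof. by rewrite /up_tile /down_tile !xpair_eqE /= andbF. Qed.

Section NoOverlap.
Variables (R : {fset cell}) (T : {fset tile}).
Hypothesis tilT : is_tiling R T.

Lemma tiling_not_up_down i : ~~ ((up_tile i \in T) && (down_tile i \in T)).
Proof.
apply/negP => /andP [upT downT]; have /eqP := up_neq_down i i; apply.
by apply: (tiling_overlap (c := (i%:Z, 0, false)) tilT upT downT);
  rewrite in_fset4 !xpair_eqE /=; lia.
Qed.

Lemma tiling_not_up_up i : ~~ ((up_tile i \in T) && (up_tile i.+1 \in T)).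
Proof.
apply/negP => /andP [up1T up2T].
have /up_tile_inj : up_tile i = up_tile i.+1.
  by apply: (tiling_overlap (c := (i.+1%:Z, 0, true)) tilT up1T up2T);
    rewrite in_fset4 !xpair_eqE /=; lia.
lia.
Qed.

Lemma tiling_not_down_down i : ~~ ((down_tile i \in T) && (down_tile i.+1 \in T)).
Proof.
apply/negP => /andP [down1T down2T].
have /down_tile_inj : down_tile i = down_tile i.+1.
  by apply: (tiling_overlap (c := (i%:Z, 1, false)) tilT down1T down2T);
    rewrite in_fset4 !xpair_eqE /=; lia.
lia.
Qed.

End NoOverlap.

End LargeTilesOfH.

Section TilingsAsWords.
Local Open Scope fset_scope.

Definition large_tiles (s : seq slot) : seq tile :=
  [seq up_tile i | i <- iota 0 (size s) & (nth slot0 s i).1] ++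
  [seq down_tile i | i <- iota 0 (size s) & (nth slot0 s i).2].

Lemma mem_large_tiles_up s i :
  (up_tile i \in large_tiles s) = (i < size s)%N && (nth slot0 s i).1.
Proof.
rewrite mem_cat (mem_map up_tile_inj) mem_filter mem_iota andbC /=.
case: (_ && _) => //=; apply/negP => /mapP [j _ /eqP].
by rewrite (negbTE (up_neq_down i j)).
Qed.

Lemma mem_large_tiles_down s i :
  (down_tile i \in large_tiles s) = (i < size s)%N && (nth slot0 s i).2.
Proof.
rewrite mem_cat (mem_map down_tile_inj) mem_filter mem_iota andbC /=.
rewrite orbC; case: (_ && _) => //=; apply/negP => /mapP [j _ /eqP].
by rewrite eq_sym (negbTE (up_neq_down j i)).
Qed.

Lemma mem_large_tilesP s t : t \in large_tiles s ->
  (exists i, [/\ t = up_tile i, (i < size s)%N & (nth slot0 s i).1]) \/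
  (exists i, [/\ t = down_tile i, (i < size s)%N & (nth slot0 s i).2]).
Proof.
rewrite mem_cat => /orP [] /mapP [i]; rewrite mem_filter mem_iota /= => /andP [si i_lt] ->.
  by left; exists i.
by right; exists i.
Qed.

Lemma large_tiles_large s t : t \in large_tiles s -> is_large t.
Proof. by case/mem_large_tilesP => -[i [-> _ _]]. Qed.

Lemma uniq_large_tiles s : uniq (large_tiles s).
Proof.
rewrite cat_uniq (map_inj_uniq up_tile_inj) (map_inj_uniq down_tile_inj).
rewrite !filter_uniq ?iota_uniq //= andbT; apply/hasPn => _ /mapP [j _ ->].
by apply/mapP => -[k _ /eqP]; rewrite eq_sym (negbTE (up_neq_down k j)).
Qed.

Lemma size_large_tiles s : size (large_tiles s) = weight s.
Proof.
have count_nth (a : pred slot) : count a s = count (a \o nth slot0 s) (iota 0 (size s)).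
  by rewrite -[in LHS](mkseq_nth slot0 s) count_map.
by rewrite size_cat !size_map !size_filter /weight !count_nth.
Qed.

Lemma disjoint_large_tiles s : path compatible slot0 s ->
  forall t1 t2, t1 \in large_tiles s -> t2 \in large_tiles s -> t1 != t2 ->
    [disjoint tile_cells t1 & tile_cells t2].
Proof.
move/(pathP slot0) => ok.
have adj i : (i.+1 < size s)%N -> compatible (nth slot0 s i) (nth slot0 s i.+1).
  exact: ok i.+1.
move=> t1 t2 /mem_large_tilesP [] [i [-> i_lt si]] /mem_large_tilesP [] [j [-> j_lt sj]] ne.
- apply: disjoint_up_tiles; first by apply: contra ne => /eqP ->.
    by apply/eqP => eq_ij; subst i; move: (adj j i_lt); rewrite /compatible si sj andbF.
  by apply/eqP => eq_ji; subst j; move: (adj i j_lt); rewrite /compatible si sj andbF.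
- apply: disjoint_up_down; apply/eqP => eq_ij; subst j.
  by move: (ok i i_lt); rewrite /compatible si sj.
- apply: disjoint_down_up; apply/eqP => eq_ij; subst j.
  by move: (ok i i_lt); rewrite /compatible si sj.
- apply: disjoint_down_tiles; first by apply: contra ne => /eqP ->.
    by apply/eqP => eq_ij; subst i; move: (adj j i_lt); rewrite /compatible si sj !andbF.
  by apply/eqP => eq_ji; subst j; move: (adj i j_lt); rewrite /compatible si sj !andbF.
Qed.

Variables (punct : bool) (n : nat).

Definition word_of (T : {fset tile}) : seq slot :=
  [seq (up_tile i \in T, down_tile i \in T) | i <- iota 0 n.-1].

Definition tiling_of (s : seq slot) : {fset tile} := fill (region punct n) (large_tiles s).

(* In P_n the last up tile would cover the removed cell. *)
Definition region_words : seq (seq slot) :=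
  if punct then filter no_final_up (words n.-1) else words n.-1.

Lemma size_word_of T : size (word_of T) = n.-1.
Proof. by rewrite size_map size_iota. Qed.

Lemma nth_word_of T i : (i < n.-1)%N -> nth slot0 (word_of T) i = (up_tile i \in T, down_tile i \in T).
Proof. by move=> i_lt; rewrite (nth_map 0%N) ?size_iota // nth_iota. Qed.

Lemma mem_region_words s :
  (s \in region_words) = [&& size s == n.-1, path compatible slot0 s & punct ==> no_final_up s].
Proof. by rewrite /region_words; case: punct; rewrite ?mem_filter mem_words ?andbT // andbC andbA. Qed.

Lemma uniq_region_words : uniq region_words.
Proof. by rewrite /region_words; case: punct; rewrite ?filter_uniq // uniq_words. Qed.

Lemma word_of_tiling_of s : size s = n.-1 -> word_of (tiling_of s) = s.
Proof.
move=> s_size; apply: (eq_from_nth (x0 := slot0)) => [|i]; first by rewrite size_word_of s_size.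
rewrite size_word_of => i_lt; rewrite nth_word_of // /tiling_of !mem_fill_large //.
by rewrite mem_large_tiles_up mem_large_tiles_down s_size i_lt; case: (nth _ _ _).
Qed.

Lemma tiling_of_inj : {in region_words &, injective tiling_of}.
Proof.
move=> s1 s2; rewrite !mem_region_words => /and3P [/eqP size1 _ _] /and3P [/eqP size2 _ _] eq12.
by rewrite -(word_of_tiling_of size1) -(word_of_tiling_of size2) eq12.
Qed.

Lemma tiling_of_tiling s : s \in region_words -> is_tiling (region punct n) (tiling_of s).
Proof.
rewrite mem_region_words => /and3P [/eqP s_size s_path s_last].
apply: fill_tiling; [exact: large_tiles_large | | exact: disjoint_large_tiles].
move=> t /mem_large_tilesP [] [i [-> + si]]; rewrite s_size => i_lt;
  last by apply: down_tile_sub; lia.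
apply: up_tile_sub; first lia.
apply/negP => /andP [p_punct /eqP i_last]; move: s_last; rewrite p_punct /no_final_up.
by rewrite -nth_last s_size -i_last /= si.
Qed.

Lemma word_of_tiling T : is_tiling (region punct n) T ->
  word_of T \in region_words /\ T = tiling_of (word_of T).
Proof.
move=> tilT; have [sub _ _] := tilingP tilT; split.
  rewrite mem_region_words size_word_of eqxx /=; apply/andP; split.
    apply/(pathP slot0) => i; rewrite size_word_of => i_lt; rewrite nth_word_of //.
    case: i i_lt => [|i] i_lt; first by rewrite /compatible /= (negbTE (tiling_not_up_down tilT 0)).
    rewrite /= nth_word_of; last lia.
    by rewrite /compatible /= (negbTE (tiling_not_up_down tilT i.+1))
      (negbTE (tiling_not_up_up tilT i)) (negbTE (tiling_not_down_down tilT i)).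
  apply/implyP => p_punct; rewrite /no_final_up.
  case n_eq: n.-1 => [|m]; first by rewrite /word_of n_eq.
  rewrite -nth_last size_word_of n_eq /= nth_word_of ?n_eq //=.
  apply/negP => /sub up_sub; have := large_tile_in_region (t := up_tile m) isT up_sub.
  case=> i [i_lt [[/up_tile_inj eq_mi /negP []]|/eqP]].
    by rewrite p_punct; apply/eqP; lia.
  by rewrite (negbTE (up_neq_down m i)).
apply: tiling_fill => // -[[] c]; last first.
  by rewrite andbF; apply/negP => /large_tiles_large.
rewrite andbT; apply/idP/idP.
  by case/mem_large_tilesP => -[i [-> +]]; rewrite size_word_of => i_lt; rewrite nth_word_of.
move=> cT; have := large_tile_in_region (t := (true, c)) isT (sub _ cT).
case=> i [i_lt [[c_eq _]|c_eq]]; rewrite c_eq in cT *.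
  by rewrite mem_large_tiles_up size_word_of nth_word_of /= ?cT; lia.
by rewrite mem_large_tiles_down size_word_of nth_word_of /= ?cT; lia.
Qed.

Lemma tilings_region : tilings (region punct n) = [fset tiling_of s | s in region_words].
Proof.
apply/fsetP => T; rewrite mem_tilings; apply/idP/imfsetP => [/word_of_tiling [ws ->]|[s ws ->]].
  by exists (word_of T).
exact: tiling_of_tiling.
Qed.

Lemma perm_region_words : perm_eq (enum_finmem (mem region_words)) region_words.
Proof. by apply: uniq_perm; [exact: enum_finmem_uniq | exact: uniq_region_words | exact: enum_finmemE]. Qed.

Lemma num_tilings_region : num_tilings (region punct n) = size region_words.
Proof.
rewrite /num_tilings tilings_region card_in_imfset; last exact: tiling_of_inj.
exact: perm_size perm_region_words.
Qed.

Lemma num_large_total_region :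
  num_large_total (region punct n) = \sum_(s <- region_words) weight s.
Proof.
rewrite /num_large_total tilings_region big_imfset /=; last exact: tiling_of_inj.
rewrite (perm_big _ perm_region_words); apply: eq_bigr => s _.
by rewrite card_large_fill ?size_large_tiles //; [exact: uniq_large_tiles | exact: large_tiles_large].
Qed.

End TilingsAsWords.

Local Open Scope ring_scope.

Theorem theorem6 (n : nat) (hn : (1 <= n)%N) :
  (qn n)%:R = (1 / 2 : rat) * n%:R * (Hn n)%:R - (1 / 2 : rat) * (Pn n)%:R /\
  (rn n)%:R = (1 / 2 : rat) * n%:R * (Pn n)%:R - (1 / 2 : rat) * (Pn n)%:R /\
  (1 / 2 : rat) * n%:R * (Pn n)%:R - (1 / 2 : rat) * (Pn n)%:R
    = ((n%:R - 1) / 2 : rat) * (Pn n)%:R.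
Proof.
have [weightH weightP] := weight_words n.-1.
have HnE : Hn n = size (words n.-1) := num_tilings_region false n.
have PnE : Pn n = count no_final_up (words n.-1).
  by rewrite -size_filter; exact: num_tilings_region true n.
have qnE : qn n = \sum_(s <- words n.-1) weight s := num_large_total_region false n.
have rnE : rn n = \sum_(s <- words n.-1 | no_final_up s) weight s.
  by rewrite -big_filter; exact: num_large_total_region true n.
rewrite -HnE -PnE -qnE -rnE prednK // in weightH weightP.
move/(congr1 (fun m => m%:R : rat)): weightH; rewrite natrD !natrM => weightH.
move/(congr1 (fun m => m%:R : rat)): weightP; rewrite !natrM -subn1 natrB // => weightP.
by split; [|split]; lra.
Qed.
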